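(* Let $n\ge 3$ and let $g_*$ be the round metric of sectional curvature $1$ on $S^n$. For $i=1,2$ let $f_i:[a_i,b_i]\to\mathbb{R}$ be smooth functions such that (I) $f_i>0$, $f_i'>0$ and $f_i''>0$ on $[a_i,b_i]$; (II) the metric $dt^2+f_i(t)^2g_*$ on $[a_i,b_i]\times S^n$ has positive scalar curvature; (III) $f_1(b_1)<f_2(a_2)$ and $f_1'(b_1)=f_2'(a_2)$. Suppose the intervals are positioned (after translation) so that $a_2-b_1=(f_2(a_2)-f_1(b_1))/f_1'(b_1)$. Then there exists a smooth function $f:[a_1,b_2]\to\mathbb{R}$ such that (i) $f>0$ and $f'>0$ on $[a_1,b_2]$; (ii) $f=f_1$ on $[a_1,\frac{a_1+b_1}{2}]$; (iii) $f=f_2$ on $[\frac{a_2+b_2}{2},b_2]$; (iv) the metric $dt^2+f(t)^2g_*$ on $[a_1,b_2]\times S^n$ has positive scalar curvature. *)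

From Stdlib Require Import Reals.
From Coquelicot Require Import Coquelicot.
Open Scope R_scope.

(* f is smooth on the closed interval [a,b]: f is C^infinity on an open
   neighbourhood (a-eps, b+eps) of [a,b]. (By Seeley's extension theorem this
   is equivalent to smoothness on [a,b] with one-sided derivatives.) *)
Definition smooth_on (a b : R) (f : R -> R) : Prop :=
  exists eps : R, 0 < eps /\
    forall (k : nat) (t : R), a - eps < t < b + eps -> ex_derive_n f k t.

(* Scalar curvature at (t, x) of the warped product metric dt^2 + f(t)^2 g_*
   on I x S^n, where g_* is the round metric of sectional curvature 1 on S^n.
   It is independent of x and equals
     -2n f''/f + n(n-1)(1 - f'^2)/f^2. *)
Definition warped_scal (n : nat) (f : R -> R) (t : R) : R :=
  - 2 * INR n * Derive_n f 2 t / f t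
  + INR n * (INR n - 1) * (1 - (Derive f t) ^ 2) / (f t) ^ 2.

Definition warped_psc (n : nat) (a b : R) (f : R -> R) : Prop :=
  forall t, a <= t <= b -> 0 < warped_scal n f t.

(* Let m = f1'(b1) = f2'(a2).  By the positioning condition the tangent line L of f1 at b1
   passes through (a2, f2(a2)), and m < 1 because the numerator -2 f f'' + (n - 1)(1 - f'^2)
   of the scalar curvature is positive while f'' > 0.  Near b1, f1 is replaced by the
   function with the same 1-jet at a point p < b1 and second derivative (1 - rho) f1'', where
   rho is a smooth step from 0 to 1 just after p: it agrees with f1 before p, is affine near
   b1, and lies below f1 with smaller slope and curvature, which only increases the
   numerator.  Symmetrically f2 is made affine near a2; there the slope increases, but so
   little that the positive numerator of f2 at a2 absorbs it.  Both affine pieces are close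
   to L, and blending them with a fixed smooth step across [b1, a2] gives a function that is
   C^2-close to L, along which the numerator is (n - 1)(1 - m^2) > 0. *)

From Stdlib Require Import Reals List Lra Lia Psatz.
Import ListNotations.
From Coquelicot Require Import Coquelicot.
Open Scope R_scope.

(** * Smooth functions on open sets *)

Definition ointerval (u v : R) : R -> Prop := fun t => u < t < v.

Lemma open_ointerval u v : open (ointerval u v).
Proof. apply open_and; [apply open_gt | apply open_lt]. Qed.

Definition smooth (U : R -> Prop) (f : R -> R) : Prop :=
  forall k t, U t -> ex_derive_n f k t.

Definition ex_derive_upto (U : R -> Prop) (k : nat) (f : R -> R) : Prop :=
  forall j t, (j <= k)%nat -> U t -> ex_derive_n f j t.

Lemma smooth_upto U f : smooth U f <-> forall k, ex_derive_upto U k f.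
Proof.
  split; intros H k.
  - intros j t _ Ht; exact (H j t Ht).
  - intros t Ht; exact (H k k t (le_n k) Ht).
Qed.

Lemma ex_derive_upto_0 U f : ex_derive_upto U 0 f.
Proof. intros j t Hj _; replace j with 0%nat by lia; exact I. Qed.

Lemma Derive_n_Derive f j x : Derive_n (Derive f) j x = Derive_n f (S j) x.
Proof.
  rewrite <- Nat.add_1_r, <- (Derive_n_comp f j 1 x).
  now apply Derive_n_ext.
Qed.

Lemma ex_derive_upto_S U k f :
  ex_derive_upto U (S k) f <->
  (forall t, U t -> ex_derive f t) /\ ex_derive_upto U k (Derive f).
Proof.
  split.
  - intros H; split.
    + intros t Ht; exact (H 1%nat t ltac:(lia) Ht).
    + intros [|j] t Hj Ht; [exact I|].
      apply ex_derive_ext with (f := Derive_n f (S j)).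
      { intros y; now rewrite Derive_n_Derive. }
      exact (H (S (S j)) t ltac:(lia) Ht).
  - intros [H1 H2] [|[|j]] t Hj Ht; [exact I | exact (H1 t Ht) |].
    apply ex_derive_ext with (f := Derive_n (Derive f) j).
    { intros y; now rewrite Derive_n_Derive. }
    exact (H2 (S j) t ltac:(lia) Ht).
Qed.

Lemma ex_derive_upto_weaken U k f : ex_derive_upto U (S k) f -> ex_derive_upto U k f.
Proof. intros H j t Hj Ht; apply H; [lia | exact Ht]. Qed.

Section SmoothAlgebra.
Variable U : R -> Prop.
Hypothesis HU : open U.

Lemma ex_derive_upto_ext k f g :
  (forall t, U t -> f t = g t) -> ex_derive_upto U k f -> ex_derive_upto U k g.
Proof.
  intros Hfg H j t Hj Ht; apply ex_derive_n_ext_loc with f.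
  - exact (locally_open U _ HU Hfg t Ht).
  - now apply H.
Qed.

Lemma ex_derive_upto_plus k f g :
  ex_derive_upto U k f -> ex_derive_upto U k g ->
  ex_derive_upto U k (fun x => f x + g x).
Proof.
  intros Hf Hg j t Hj Ht.
  apply ex_derive_n_plus; apply (locally_open U _ HU); try exact Ht;
    intros y Hy i Hi; [apply Hf | apply Hg]; trivial; lia.
Qed.

Lemma ex_derive_upto_scal k a f :
  ex_derive_upto U k f -> ex_derive_upto U k (fun x => a * f x).
Proof. intros Hf j t Hj Ht; apply ex_derive_n_scal_l; now apply Hf. Qed.

Lemma ex_derive_upto_mult k : forall f g,
  ex_derive_upto U k f -> ex_derive_upto U k g ->
  ex_derive_upto U k (fun x => f x * g x).
Proof.
  induction k as [|k IH]; intros f g Hf Hg; [apply ex_derive_upto_0|].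
  pose proof Hf as [Hf1 Hf2] % ex_derive_upto_S.
  pose proof Hg as [Hg1 Hg2] % ex_derive_upto_S.
  apply ex_derive_upto_S; split.
  - intros t Ht; apply ex_derive_mult; auto.
  - apply ex_derive_upto_ext with (fun x => Derive f x * g x + f x * Derive g x).
    { intros t Ht; rewrite Derive_mult; auto. }
    apply ex_derive_upto_plus; apply IH; auto; now apply ex_derive_upto_weaken.
Qed.

Lemma ex_derive_upto_inv k : forall g,
  (forall t, U t -> g t <> 0) -> ex_derive_upto U k g ->
  ex_derive_upto U k (fun x => / g x).
Proof.
  induction k as [|k IH]; intros g Hnz Hg; [apply ex_derive_upto_0|].
  pose proof Hg as [Hg1 Hg2] % ex_derive_upto_S.
  assert (Hd : forall t, U t -> is_derive (fun y => / g y) t (- Derive g t / g t ^ 2)).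
  { intros t Ht; apply is_derive_inv; [apply Derive_correct|]; auto. }
  apply ex_derive_upto_S; split.
  - intros t Ht; eexists; now apply Hd.
  - apply ex_derive_upto_ext with (fun x => - Derive g x * (/ g x * / g x)).
    { intros t Ht; transitivity (- Derive g t / g t ^ 2); [field; auto|].
      symmetry; apply is_derive_unique, Hd, Ht. }
    assert (Hi : ex_derive_upto U k (fun x => / g x))
      by (apply IH; auto; now apply ex_derive_upto_weaken).
    apply ex_derive_upto_mult; [|now apply ex_derive_upto_mult].
    apply ex_derive_upto_ext with (fun x => -1 * Derive g x); [intros; ring|].
    now apply ex_derive_upto_scal.
Qed.

Lemma smooth_ext f g : (forall t, U t -> f t = g t) -> smooth U f -> smooth U g.
Proof.
  intros Hfg Hf; apply smooth_upto; intros k.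
  apply ex_derive_upto_ext with f; auto; now apply smooth_upto.
Qed.

Lemma smooth_plus f g : smooth U f -> smooth U g -> smooth U (fun x => f x + g x).
Proof.
  intros Hf Hg; apply smooth_upto; intros k.
  apply ex_derive_upto_plus; now apply smooth_upto.
Qed.

Lemma smooth_mult f g : smooth U f -> smooth U g -> smooth U (fun x => f x * g x).
Proof.
  intros Hf Hg; apply smooth_upto; intros k.
  apply ex_derive_upto_mult; now apply smooth_upto.
Qed.

Lemma smooth_inv g : (forall t, U t -> g t <> 0) -> smooth U g -> smooth U (fun x => / g x).
Proof.
  intros Hnz Hg; apply smooth_upto; intros k.
  apply ex_derive_upto_inv; auto; now apply smooth_upto.
Qed.

End SmoothAlgebra.

Lemma smooth_const U a : smooth U (fun _ => a).
Proof. intros k t _; apply ex_derive_n_const. Qed.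

Lemma smooth_scal U a f : smooth U f -> smooth U (fun x => a * f x).
Proof. intros Hf k t Ht; apply ex_derive_n_scal_l; now apply Hf. Qed.

Lemma smooth_affine U a b : smooth U (fun x => a + b * x).
Proof.
  intros k t _; apply ex_derive_n_ext with (fun x => a + b * x ^ 1); [intros; ring|].
  apply ex_derive_n_plus; apply filter_forall; intros y j _;
    [apply ex_derive_n_const | apply ex_derive_n_scal_l, ex_derive_n_pow].
Qed.

Lemma smooth_comp_affine U f a b :
  smooth (fun _ => True) f -> smooth U (fun x => f (a * x + b)).
Proof.
  intros Hf k t _.
  apply (ex_derive_n_comp_scal (fun z => f (z + b))).
  apply filter_forall; intros y j _; now apply ex_derive_n_comp_trans, Hf.
Qed.

Lemma smooth_subset U V f : (forall t, V t -> U t) -> smooth U f -> smooth V f.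
Proof. intros HVU Hf k t Ht; apply Hf, HVU, Ht. Qed.

Lemma smooth_Derive_n U f m : smooth U f -> smooth U (Derive_n f m).
Proof.
  intros Hf [|k] t Ht; [exact I|].
  apply ex_derive_ext with (f := Derive_n f (k + m)).
  { intros y; now rewrite Derive_n_comp. }
  exact (Hf (S (k + m)) t Ht).
Qed.

Lemma smooth_ex_derive U f t : smooth U f -> U t -> ex_derive f t.
Proof. intros Hf Ht; exact (Hf 1%nat t Ht). Qed.

Lemma smooth_continuous U f t : smooth U f -> U t -> continuous f t.
Proof.
  intros Hf Ht; apply (@ex_derive_continuous R_AbsRing R_NormedModule).
  now apply (smooth_ex_derive U).
Qed.

Lemma smooth_is_derive U f t : smooth U f -> U t -> is_derive f t (Derive f t).
Proof. intros Hf Ht; apply Derive_correct, (smooth_ex_derive U); auto. Qed.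

Lemma smooth_is_derive2 U f t :
  smooth U f -> U t -> is_derive (Derive f) t (Derive_n f 2 t).
Proof.
  intros Hf Ht; apply Derive_correct.
  apply (smooth_ex_derive U); [apply (smooth_Derive_n U f 1 Hf) | exact Ht].
Qed.

(** * A smooth step *)

(* The family is closed under differentiation ([flat_derive]), which makes each member
   smooth. *)
Definition flat (j : nat) (x : R) : R :=
  if Rlt_dec 0 x then exp (- / x) / x ^ j else 0.

Lemma flat_pos j x : 0 < x -> flat j x = exp (- / x) / x ^ j.
Proof. intros Hx; unfold flat; destruct (Rlt_dec 0 x); [reflexivity | lra]. Qed.

Lemma flat_nonpos j x : x <= 0 -> flat j x = 0.
Proof. intros Hx; unfold flat; destruct (Rlt_dec 0 x); [lra | reflexivity]. Qed.

Lemma flat_gt0 j x : 0 < x -> 0 < flat j x.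
Proof.
  intros Hx; rewrite flat_pos by exact Hx.
  apply Rdiv_lt_0_compat; [apply exp_pos | now apply pow_lt].
Qed.

Lemma flat_ge0 j x : 0 <= flat j x.
Proof.
  destruct (Rlt_le_dec 0 x) as [Hx|Hx];
    [now apply Rlt_le, flat_gt0 | now rewrite flat_nonpos by exact Hx; right].
Qed.

Lemma exp_mult_INR n z : exp (INR n * z) = exp z ^ n.
Proof.
  induction n as [|n IH]; [simpl; rewrite Rmult_0_l; apply exp_0|].
  rewrite S_INR, Rmult_plus_distr_r, Rmult_1_l, exp_plus, IH; simpl; ring.
Qed.

(* [(y / N) ^ N <= exp y] with [y = 1 / x] and [N = j + 2]. *)
Lemma flat_le_square j x : 0 < x -> flat j x <= INR (j + 2) ^ (j + 2) * x ^ 2.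
Proof.
  intros Hx; rewrite flat_pos by exact Hx.
  set (N := INR (j + 2)); set (y := / x).
  assert (HN : 0 < N) by (apply lt_0_INR; lia).
  assert (Hy : 0 < y) by now apply Rinv_0_lt_compat.
  assert (Hexp : (y / N) ^ (j + 2) <= exp y).
  { replace (exp y) with (exp (y / N) ^ (j + 2))
      by (rewrite <- exp_mult_INR; f_equal; fold N; field; lra).
    assert (0 < y / N) by (apply Rdiv_lt_0_compat; lra).
    pose proof (exp_ineq1 (y / N) ltac:(lra)).
    apply pow_incr; lra. }
  assert (Hxj : 0 < x ^ j) by now apply pow_lt.
  assert (Hkey : (y / N) ^ (j + 2) * x ^ j = / (N ^ (j + 2) * x ^ 2)).
  { unfold y; rewrite pow_add; unfold Rdiv.
    rewrite Rpow_mult_distr, pow_inv, pow_inv, pow_add.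
    field; repeat split; try apply pow_nonzero; lra. }
  assert (Hpos : 0 < N ^ (j + 2) * x ^ 2) by (apply Rmult_lt_0_compat; apply pow_lt; lra).
  replace (exp (- y) / x ^ j) with (/ (exp y * x ^ j))
    by (rewrite exp_Ropp; pose proof (exp_pos y); field; split; lra).
  rewrite <- (Rinv_inv (N ^ (j + 2) * x ^ 2)).
  apply Rinv_le_contravar; [now apply Rinv_0_lt_compat|].
  rewrite <- Hkey; apply Rmult_le_compat_r; lra.
Qed.

Lemma flat_derive_at_0 j : is_derive (flat j) 0 0.
Proof.
  apply is_derive_Reals; intros eps Heps.
  set (C := INR (j + 2) ^ (j + 2)).
  assert (HC : 0 < C) by (apply pow_lt, lt_0_INR; lia).
  assert (Hd : 0 < eps / C) by (apply Rdiv_lt_0_compat; lra).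
  exists (mkposreal _ Hd); intros h Hh0 Hh; simpl in Hh.
  rewrite Rplus_0_l, (flat_nonpos j 0), Rminus_0_r, Rminus_0_r by lra.
  destruct (Rlt_le_dec 0 h) as [Hp|Hn].
  - pose proof (flat_le_square j h Hp) as Hsq; fold C in Hsq.
    pose proof (flat_gt0 j h Hp).
    rewrite Rabs_pos_eq in Hh by lra.
    rewrite Rabs_pos_eq by (apply Rlt_le, Rdiv_lt_0_compat; lra).
    apply Rle_lt_trans with (C * h).
    + apply Rle_div_l; [lra | nra].
    + apply (Rmult_lt_reg_r (/ C)); [now apply Rinv_0_lt_compat|].
      replace (C * h * / C) with h by (field; lra); exact Hh.
  - rewrite flat_nonpos by exact Hn; unfold Rdiv; rewrite Rmult_0_l, Rabs_R0; lra.
Qed.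

Lemma flat_derive j x : is_derive (flat j) x (- INR j * flat (S j) x + flat (S (S j)) x).
Proof.
  destruct (Rtotal_order x 0) as [Hneg|[->|Hpos]].
  - rewrite !flat_nonpos by lra; replace (- INR j * 0 + 0) with 0 by ring.
    apply is_derive_ext_loc with (fun _ => 0); [|auto_derive; auto].
    apply (locally_open _ _ (open_lt 0)); [|exact Hneg].
    intros y Hy; now rewrite flat_nonpos by lra.
  - rewrite !flat_nonpos by lra; replace (- INR j * 0 + 0) with 0 by ring.
    apply flat_derive_at_0.
  - rewrite !flat_pos by lra.
    apply is_derive_ext_loc with (fun y => exp (- / y) / y ^ j).
    { apply (locally_open _ _ (open_gt 0)); [|exact Hpos].
      intros y Hy; now rewrite flat_pos. }
    auto_derive; [repeat split; try apply pow_nonzero; lra|].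
    destruct j as [|j]; [simpl; field; lra|].
    rewrite S_INR; simpl pred; simpl; field; repeat split; try apply pow_nonzero; lra.
Qed.

Lemma smooth_flat j : smooth (fun _ => True) (flat j).
Proof.
  apply smooth_upto; intros k; revert j.
  induction k as [|k IH]; intros j; [apply ex_derive_upto_0|].
  apply ex_derive_upto_S; split.
  - intros t _; eexists; apply flat_derive.
  - apply ex_derive_upto_ext with (fun x => - INR j * flat (S j) x + flat (S (S j)) x);
      [exact open_true | |].
    { intros t _; symmetry; apply is_derive_unique, flat_derive. }
    apply ex_derive_upto_plus; [exact open_true | apply ex_derive_upto_scal | ]; apply IH.
Qed.

Definition smooth_step (x : R) : R := flat 0 x / (flat 0 x + flat 0 (1 - x)).

Lemma smooth_step_denom_pos x : 0 < flat 0 x + flat 0 (1 - x).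
Proof.
  pose proof (flat_ge0 0 x); pose proof (flat_ge0 0 (1 - x)).
  destruct (Rlt_le_dec 0 x) as [Hx|Hx];
    [pose proof (flat_gt0 0 x Hx) | pose proof (flat_gt0 0 (1 - x) ltac:(lra))]; lra.
Qed.

Lemma smooth_smooth_step : smooth (fun _ => True) smooth_step.
Proof.
  apply smooth_mult; [exact open_true | apply smooth_flat|].
  apply smooth_inv; [exact open_true | intros t _; pose proof (smooth_step_denom_pos t); lra|].
  apply smooth_plus; [exact open_true | apply smooth_flat|].
  apply smooth_ext with (fun x => flat 0 (-1 * x + 1));
    [exact open_true | intros t _; f_equal; ring|].
  apply smooth_comp_affine, smooth_flat.
Qed.

Lemma smooth_step_0 x : x <= 0 -> smooth_step x = 0.
Proof. intros Hx; unfold smooth_step; rewrite (flat_nonpos 0 x Hx); unfold Rdiv; ring. Qed.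

Lemma smooth_step_1 x : 1 <= x -> smooth_step x = 1.
Proof.
  intros Hx; pose proof (smooth_step_denom_pos x) as Hd; unfold smooth_step in *.
  rewrite (flat_nonpos 0 (1 - x)), Rplus_0_r in * by lra; field; lra.
Qed.

Lemma smooth_step_range x : 0 <= smooth_step x <= 1.
Proof.
  pose proof (smooth_step_denom_pos x); pose proof (flat_ge0 0 x); pose proof (flat_ge0 0 (1 - x)).
  unfold smooth_step; split; [apply Rle_div_r | apply Rle_div_l]; lra.
Qed.

Definition ramp (x0 x1 t : R) : R := smooth_step ((t - x0) / (x1 - x0)).

Lemma smooth_ramp U x0 x1 : smooth U (ramp x0 x1).
Proof.
  apply smooth_subset with (fun _ => True); [auto|].
  apply smooth_ext with (fun t => smooth_step (/ (x1 - x0) * t + - (x0 / (x1 - x0))));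
    [exact open_true | intros t _; unfold ramp; f_equal; unfold Rdiv; ring|].
  apply smooth_comp_affine, smooth_smooth_step.
Qed.

Lemma ramp_0 x0 x1 t : x0 < x1 -> t <= x0 -> ramp x0 x1 t = 0.
Proof.
  intros H01 Ht; apply smooth_step_0.
  apply Rmult_le_0_r; [lra | apply Rlt_le, Rinv_0_lt_compat; lra].
Qed.

Lemma ramp_1 x0 x1 t : x0 < x1 -> x1 <= t -> ramp x0 x1 t = 1.
Proof. intros H01 Ht; apply smooth_step_1, Rle_div_r; lra. Qed.

Lemma ramp_range x0 x1 t : 0 <= ramp x0 x1 t <= 1.
Proof. apply smooth_step_range. Qed.

(** * Calculus on intervals *)

Lemma le_of_derive_nonneg phi dphi a b : a <= b ->
  (forall x, a <= x <= b -> is_derive phi x (dphi x)) ->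
  (forall x, a <= x <= b -> 0 <= dphi x) -> phi a <= phi b.
Proof.
  intros Hab Hd Hpos.
  destruct (MVT_gen phi a b dphi) as [c [Hc E]];
    rewrite ?Rmin_left, ?Rmax_right in * by lra.
  - intros x Hx; apply Hd; lra.
  - intros x Hx; apply continuity_pt_filterlim.
    apply (@ex_derive_continuous R_AbsRing R_NormedModule); eexists; apply Hd; lra.
  - specialize (Hpos c Hc); nra.
Qed.

Lemma le_of_derive_le phi dphi psi dpsi a b : a <= b ->
  (forall x, a <= x <= b -> is_derive phi x (dphi x)) ->
  (forall x, a <= x <= b -> is_derive psi x (dpsi x)) ->
  (forall x, a <= x <= b -> dphi x <= dpsi x) ->
  phi b - phi a <= psi b - psi a.
Proof.
  intros Hab Hphi Hpsi Hle.
  enough (psi a - phi a <= psi b - phi b) by lra.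
  apply (le_of_derive_nonneg (fun x => psi x - phi x) (fun x => dpsi x - dphi x)); auto.
  - intros x Hx; apply (is_derive_minus psi phi); auto.
  - intros x Hx; specialize (Hle x Hx); lra.
Qed.

Lemma eq_of_derive_zero phi a b :
  (forall x, a <= x <= b -> is_derive phi x 0) ->
  forall s t, a <= s <= b -> a <= t <= b -> phi s = phi t.
Proof.
  assert (Hle : forall s t, a <= s <= t -> t <= b ->
            (forall x, a <= x <= b -> is_derive phi x 0) -> phi s - phi t = 0).
  { intros s t Hst Htb Hd.
    pose proof (le_of_derive_le phi (fun _ => 0) (fun _ => 0) (fun _ => 0) s t
                  ltac:(lra) ltac:(intros; apply Hd; lra) ltac:(intros; auto_derive; auto)
                  ltac:(intros; lra)).
    pose proof (le_of_derive_le (fun _ => 0) (fun _ => 0) phi (fun _ => 0) s t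
                  ltac:(lra) ltac:(intros; auto_derive; auto) ltac:(intros; apply Hd; lra)
                  ltac:(intros; lra)).
    lra. }
  intros Hd s t Hs Ht; destruct (Rle_lt_dec s t).
  - pose proof (Hle s t ltac:(lra) ltac:(lra) Hd); lra.
  - pose proof (Hle t s ltac:(lra) ltac:(lra) Hd); lra.
Qed.

Lemma between_ointerval u v y t x : u < y < v -> u < t < v ->
  Rmin y t <= x <= Rmax y t -> u < x < v.
Proof.
  intros Hy Ht Hx; split.
  - apply Rlt_le_trans with (Rmin y t); [apply Rmin_glb_lt|]; lra.
  - apply Rle_lt_trans with (Rmax y t); [|apply Rmax_lub_lt]; lra.
Qed.

Lemma affine_of_second_derive_zero g g1 y t :
  (forall x, Rmin y t <= x <= Rmax y t -> is_derive g x (g1 x) /\ is_derive g1 x 0) ->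
  g1 t = g1 y /\ g t = g y + g1 y * (t - y).
Proof.
  intros Hd.
  assert (Hy : Rmin y t <= y <= Rmax y t) by (split; [apply Rmin_l | apply Rmax_l]).
  assert (Ht : Rmin y t <= t <= Rmax y t) by (split; [apply Rmin_r | apply Rmax_r]).
  assert (Hslope : forall x, Rmin y t <= x <= Rmax y t -> g1 x = g1 y)
    by (intros x Hx; apply (eq_of_derive_zero g1 (Rmin y t) (Rmax y t)); auto; apply Hd).
  split; [now apply Hslope|].
  enough (g t - g1 y * t = g y - g1 y * y) by lra.
  apply (eq_of_derive_zero (fun x => g x - g1 y * x) (Rmin y t) (Rmax y t)); auto.
  intros x Hx; replace 0 with (g1 x - g1 y * 1) by (rewrite Hslope by exact Hx; ring).
  apply (is_derive_minus g (fun x => g1 y * x)); [now apply Hd | auto_derive; auto].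
Qed.

Section Comparison.
Variables (U : R -> Prop) (f F : R -> R) (c : R).
Hypotheses (Hf : smooth U f) (HF : smooth U F).
Hypotheses (Hval : F c = f c) (Hslope : Derive F c = Derive f c).

Lemma agree_of_second_derive_eq t :
  (forall s, Rmin c t <= s <= Rmax c t -> U s /\ Derive_n F 2 s = Derive_n f 2 s) ->
  F t = f t /\ Derive F t = Derive f t.
Proof.
  intros Hs.
  destruct (affine_of_second_derive_zero (fun x => f x - F x)
              (fun x => Derive f x - Derive F x) c t) as [E1 E0].
  - intros x Hx; destruct (Hs x Hx) as [HUx E]; split.
    + apply (is_derive_minus f F); now apply (smooth_is_derive U).
    + replace 0 with (Derive_n f 2 x - Derive_n F 2 x) by lra.
      apply (is_derive_minus (Derive f) (Derive F)); now apply (smooth_is_derive2 U).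
  - rewrite Hval, Hslope in *; split; lra.
Qed.

Lemma convex_comparison_right t : c <= t ->
  (forall s, c <= s <= t -> U s /\ 0 <= Derive_n F 2 s <= Derive_n f 2 s) ->
  Derive f c <= Derive F t <= Derive f t /\
  f c + Derive f c * (t - c) <= F t <= f t.
Proof.
  intros Hct Hs.
  assert (HdF : forall x, c <= x <= t -> is_derive F x (Derive F x))
    by (intros x Hx; apply (smooth_is_derive U); [|apply Hs]; auto).
  assert (Hdf : forall x, c <= x <= t -> is_derive f x (Derive f x))
    by (intros x Hx; apply (smooth_is_derive U); [|apply Hs]; auto).
  assert (HdF1 : forall x, c <= x <= t -> is_derive (Derive F) x (Derive_n F 2 x))
    by (intros x Hx; apply (smooth_is_derive2 U); [|apply Hs]; auto).
  assert (Hdf1 : forall x, c <= x <= t -> is_derive (Derive f) x (Derive_n f 2 x))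
    by (intros x Hx; apply (smooth_is_derive2 U); [|apply Hs]; auto).
  assert (Hslopes : forall s, c <= s <= t -> Derive f c <= Derive F s <= Derive f s).
  { intros s Hs'.
    pose proof (le_of_derive_le (fun _ => 0) (fun _ => 0) (Derive F) (Derive_n F 2) c s
                  ltac:(lra) ltac:(intros; auto_derive; auto) ltac:(intros; apply HdF1; lra)
                  ltac:(intros x Hx; apply Hs; lra)).
    pose proof (le_of_derive_le (Derive F) (Derive_n F 2) (Derive f) (Derive_n f 2) c s
                  ltac:(lra) ltac:(intros; apply HdF1; lra) ltac:(intros; apply Hdf1; lra)
                  ltac:(intros x Hx; apply Hs; lra)).
    lra. }
  split; [now apply Hslopes|].
  pose proof (le_of_derive_le (fun x => Derive f c * x) (fun _ => Derive f c) F (Derive F) c t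
                ltac:(lra) ltac:(intros; auto_derive; auto; ring) HdF
                ltac:(intros x Hx; apply Hslopes; lra)).
  pose proof (le_of_derive_le F (Derive F) f (Derive f) c t Hct HdF Hdf
                ltac:(intros x Hx; apply Hslopes; lra)).
  lra.
Qed.

Lemma convex_comparison_left t : t <= c ->
  (forall s, t <= s <= c -> U s /\ 0 <= Derive_n F 2 s <= Derive_n f 2 s) ->
  Derive f t <= Derive F t <= Derive f c /\
  f c + Derive f c * (t - c) <= F t <= f t.
Proof.
  intros Htc Hs.
  assert (HdF : forall x, t <= x <= c -> is_derive F x (Derive F x))
    by (intros x Hx; apply (smooth_is_derive U); [|apply Hs]; auto).
  assert (Hdf : forall x, t <= x <= c -> is_derive f x (Derive f x))
    by (intros x Hx; apply (smooth_is_derive U); [|apply Hs]; auto).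
  assert (HdF1 : forall x, t <= x <= c -> is_derive (Derive F) x (Derive_n F 2 x))
    by (intros x Hx; apply (smooth_is_derive2 U); [|apply Hs]; auto).
  assert (Hdf1 : forall x, t <= x <= c -> is_derive (Derive f) x (Derive_n f 2 x))
    by (intros x Hx; apply (smooth_is_derive2 U); [|apply Hs]; auto).
  assert (Hslopes : forall s, t <= s <= c -> Derive f s <= Derive F s <= Derive f c).
  { intros s Hs'.
    pose proof (le_of_derive_le (fun _ => 0) (fun _ => 0) (Derive F) (Derive_n F 2) s c
                  ltac:(lra) ltac:(intros; auto_derive; auto) ltac:(intros; apply HdF1; lra)
                  ltac:(intros x Hx; apply Hs; lra)).
    pose proof (le_of_derive_le (Derive F) (Derive_n F 2) (Derive f) (Derive_n f 2) s c
                  ltac:(lra) ltac:(intros; apply HdF1; lra) ltac:(intros; apply Hdf1; lra)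
                  ltac:(intros x Hx; apply Hs; lra)).
    lra. }
  split; [now apply Hslopes|].
  pose proof (le_of_derive_le F (Derive F) (fun x => Derive f c * x) (fun _ => Derive f c) t c
                Htc HdF ltac:(intros; auto_derive; auto; ring)
                ltac:(intros x Hx; apply Hslopes; lra)).
  pose proof (le_of_derive_le f (Derive f) F (Derive F) t c Htc Hdf HdF
                ltac:(intros x Hx; apply Hslopes; lra)).
  lra.
Qed.

End Comparison.

Lemma convex_above_tangent U f c t : smooth U f -> c <= t ->
  (forall s, c <= s <= t -> U s /\ 0 <= Derive_n f 2 s) ->
  Derive f c <= Derive f t /\ f c + Derive f c * (t - c) <= f t.
Proof.
  intros Hf Hct Hs.
  destruct (convex_comparison_right U f f c Hf Hf eq_refl eq_refl t Hct) as [Hd Hv];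
    [intros s Hs'; split; [apply Hs | split; [apply Hs | lra]]; lra | split; lra].
Qed.

Lemma continuous_eps_delta h x : continuous h x -> forall eps, 0 < eps ->
  exists del, 0 < del /\ forall t, Rabs (t - x) < del -> Rabs (h t - h x) < eps.
Proof.
  intros Hc eps Heps; apply continuity_pt_filterlim in Hc.
  destruct (Hc eps Heps) as [del [Hdel H]]; exists del; split; [lra|].
  intros t Ht; destruct (Req_dec x t) as [<-|Hne].
  - rewrite Rminus_diag, Rabs_R0; lra.
  - apply H; repeat split; auto.
Qed.

Lemma positive_lower_bound (l : list R) : List.Forall (fun x => 0 < x) l ->
  exists del, 0 < del /\ List.Forall (fun x => del <= x) l.
Proof.
  induction l as [|x l IH]; intros Hl; [exists 1; split; [lra | constructor]|].
  apply Forall_cons_iff in Hl as [Hx Hl]; destruct (IH Hl) as [del [Hdel Hle]].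
  exists (Rmin x del); split; [now apply Rmin_glb_lt|].
  constructor; [apply Rmin_l|].
  eapply Forall_impl; [|exact Hle]; intros y Hy; simpl in *.
  pose proof (Rmin_r x del); lra.
Qed.

Section Primitive.
Variables (u v : R) (g : R -> R) (c : R).
Hypotheses (Hc : ointerval u v c) (Hg : smooth (ointerval u v) g).

Lemma RInt_is_derive t : ointerval u v t -> is_derive (RInt g c) t (g t).
Proof.
  intros Ht; apply (is_derive_RInt g (RInt g c) c t).
  - apply (locally_open (ointerval u v)); [apply open_ointerval | | exact Ht].
    intros b Hb; apply (@RInt_correct R_CompleteNormedModule).
    apply (@ex_RInt_continuous R_CompleteNormedModule).
    intros z Hz; apply (smooth_continuous _ _ _ Hg).
    unfold ointerval in *; destruct Hz as [Hz1 Hz2]; split.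
    + apply Rlt_le_trans with (Rmin c b); [apply Rmin_glb_lt|]; lra.
    + apply Rle_lt_trans with (Rmax c b); [|apply Rmax_lub_lt]; lra.
  - now apply (smooth_continuous _ _ _ Hg).
Qed.

Lemma smooth_RInt : smooth (ointerval u v) (RInt g c).
Proof.
  apply smooth_upto; intros [|k]; [apply ex_derive_upto_0|].
  apply ex_derive_upto_S; split.
  - intros t Ht; eexists; now apply RInt_is_derive.
  - apply ex_derive_upto_ext with g; [apply open_ointerval | |now apply smooth_upto].
    intros t Ht; symmetry; now apply is_derive_unique, RInt_is_derive.
Qed.

End Primitive.

Lemma second_primitive u v g c A B : ointerval u v c -> smooth (ointerval u v) g ->
  exists F, smooth (ointerval u v) F /\ F c = A /\ Derive F c = B /\
    forall t, ointerval u v t -> Derive_n F 2 t = g t.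
Proof.
  intros Hc Hg.
  set (G := RInt g c); set (H := RInt G c).
  assert (HG : smooth (ointerval u v) G) by now apply smooth_RInt.
  assert (HdF : forall t, ointerval u v t ->
            is_derive (fun x => A + B * (x - c) + H x) t (B + G t)).
  { intros t Ht; apply (is_derive_plus (fun x => A + B * (x - c)) H).
    - auto_derive; auto; ring.
    - now apply (RInt_is_derive u v). }
  exists (fun x => A + B * (x - c) + H x); repeat split.
  - apply smooth_plus; [apply open_ointerval | | now apply smooth_RInt].
    apply smooth_ext with (fun x => (A - B * c) + B * x); [apply open_ointerval | intros; ring|].
    apply smooth_affine.
  - unfold H; rewrite (@RInt_point R_CompleteNormedModule); unfold zero; simpl; ring.
  - transitivity (B + G c); [now apply is_derive_unique, HdF|].
    unfold G; rewrite (@RInt_point R_CompleteNormedModule); unfold zero; simpl; ring.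
  - intros t Ht; change (Derive (Derive (fun x => A + B * (x - c) + H x)) t = g t).
    rewrite (Derive_ext_loc _ (fun x => B + G x)).
    + apply is_derive_unique; rewrite <- (Rplus_0_l (g t)).
      apply (is_derive_plus (fun _ => B) G); [auto_derive; auto|].
      now apply (RInt_is_derive u v).
    + apply (locally_open (ointerval u v)); [apply open_ointerval | | exact Ht].
      intros y Hy; now apply is_derive_unique, HdF.
Qed.

(** * The scalar curvature numerator *)

Definition scal_numerator (nR F D D2 : R) : R := -2 * D2 * F + (nR - 1) * (1 - D ^ 2).

Lemma warped_scal_numerator n f t : 0 < f t ->
  warped_scal n f t =
  INR n * scal_numerator (INR n) (f t) (Derive f t) (Derive_n f 2 t) / f t ^ 2.
Proof. intros Hf; unfold warped_scal, scal_numerator; field; lra. Qed.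

Definition psc_increasing_at (nR : R) (f : R -> R) (t : R) : Prop :=
  0 < f t /\ 0 < Derive f t /\
  0 < scal_numerator nR (f t) (Derive f t) (Derive_n f 2 t).

Lemma psc_increasing_at_iff n f t : (0 < n)%nat ->
  psc_increasing_at (INR n) f t <->
  0 < f t /\ 0 < Derive f t /\ 0 < warped_scal n f t.
Proof.
  intros Hn; assert (HnR : 0 < INR n) by now apply lt_0_INR.
  unfold psc_increasing_at; split; intros [Hf [Hd Hs]]; repeat split; auto;
    rewrite warped_scal_numerator in * by exact Hf;
    assert (Hf2 : 0 < f t ^ 2) by (apply pow_lt; lra).
  - apply Rdiv_lt_0_compat; nra.
  - apply (Rmult_lt_reg_l (INR n / f t ^ 2)); [apply Rdiv_lt_0_compat; lra|].
    rewrite Rmult_0_r; unfold Rdiv in *; rewrite Rmult_assoc, (Rmult_comm (/ _)), <- Rmult_assoc.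
    exact Hs.
Qed.

Lemma psc_increasing_at_jet nR f g t :
  g t = f t -> Derive g t = Derive f t -> Derive_n g 2 t = Derive_n f 2 t ->
  psc_increasing_at nR f t -> psc_increasing_at nR g t.
Proof. unfold psc_increasing_at; intros -> -> ->; auto. Qed.

Lemma psc_increasing_at_locally nR f g t : locally t (fun y => f y = g y) ->
  psc_increasing_at nR f t -> psc_increasing_at nR g t.
Proof.
  intros Hloc; apply psc_increasing_at_jet.
  - symmetry; exact (locally_singleton _ _ Hloc).
  - symmetry; now apply Derive_ext_loc.
  - symmetry; now apply Derive_n_ext_loc.
Qed.

Lemma scal_numerator_ge nR F D D2 F' D' D2' : 0 < F <= F' -> 0 <= D2 <= D2' ->
  scal_numerator nR F' D' D2' - (nR - 1) * (D ^ 2 - D' ^ 2) <= scal_numerator nR F D D2.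
Proof.
  intros HF HD2; unfold scal_numerator.
  assert (D2 * F <= D2' * F') by (apply Rmult_le_compat; lra).
  lra.
Qed.

Lemma smooth_scal_numerator U nR f : open U -> smooth U f ->
  smooth U (fun t => scal_numerator nR (f t) (Derive f t) (Derive_n f 2 t)).
Proof.
  intros HU Hf; pose proof (smooth_Derive_n U f 1 Hf) as Hf1.
  pose proof (smooth_Derive_n U f 2 Hf) as Hf2.
  apply smooth_ext with (fun t => -2 * (Derive_n f 2 t * f t)
                                   + (nR - 1) * (1 + -1 * (Derive f t * Derive f t)));
    [exact HU | intros; unfold scal_numerator; simpl; ring|].
  apply smooth_plus; [exact HU | apply smooth_scal, smooth_mult; auto |].
  apply smooth_scal, smooth_plus; [exact HU | apply smooth_const |].
  apply smooth_scal, smooth_mult; auto.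
Qed.

Lemma slope_lt_1 nR F D D2 : 1 < nR -> 0 < F -> 0 <= D -> 0 <= D2 ->
  0 < scal_numerator nR F D D2 -> D < 1.
Proof.
  unfold scal_numerator; intros Hn HF HD HD2 Hs.
  assert (0 <= D2 * F) by (apply Rmult_le_pos; lra).
  assert (0 < (nR - 1) * (1 - D ^ 2)) by lra.
  assert (0 < 1 - D ^ 2).
  { apply (Rmult_lt_reg_l (nR - 1)); lra. }
  nra.
Qed.

(** * Making a convex function affine near an endpoint *)

Lemma smooth_mult_second_derive U rho f : open U ->
  smooth U rho -> smooth U f -> smooth U (fun t => rho t * Derive_n f 2 t).
Proof. intros HU Hrho Hf; apply smooth_mult; auto; now apply smooth_Derive_n. Qed.

Lemma psc_increasing_at_below nR f F t : 1 <= nR ->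
  0 < F t <= f t -> 0 < Derive F t <= Derive f t -> 0 <= Derive_n F 2 t <= Derive_n f 2 t ->
  psc_increasing_at nR f t -> psc_increasing_at nR F t.
Proof.
  intros Hn HF HF' HF'' [_ [_ Hnum]]; split; [lra | split; [lra|]].
  eapply Rlt_le_trans;
    [|apply (scal_numerator_ge nR _ _ _ (f t) (Derive f t) (Derive_n f 2 t)); auto].
  assert (Derive F t ^ 2 <= Derive f t ^ 2) by (apply pow_incr; lra).
  assert (0 <= (nR - 1) * (Derive f t ^ 2 - Derive F t ^ 2)) by (apply Rmult_le_pos; lra).
  lra.
Qed.

Lemma psc_increasing_at_margin nR f F t s : 1 <= nR ->
  0 < F t <= f t -> 0 < Derive f t <= Derive F t -> Derive F t <= s ->
  0 <= Derive_n F 2 t <= Derive_n f 2 t ->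
  (nR - 1) * (s ^ 2 - Derive f t ^ 2) < scal_numerator nR (f t) (Derive f t) (Derive_n f 2 t) ->
  psc_increasing_at nR F t.
Proof.
  intros Hn HF HF' Hs HF'' Hmargin; split; [lra | split; [lra|]].
  eapply Rlt_le_trans;
    [|apply (scal_numerator_ge nR _ _ _ (f t) (Derive f t) (Derive_n f 2 t)); auto].
  assert (Derive F t ^ 2 <= s ^ 2) by (apply pow_incr; lra).
  assert ((nR - 1) * (Derive F t ^ 2 - Derive f t ^ 2) <= (nR - 1) * (s ^ 2 - Derive f t ^ 2))
    by (apply Rmult_le_compat_l; lra).
  lra.
Qed.

Lemma flatten_after a b e f p del :
  0 < e -> a - e < p -> 0 < del -> p + del < b ->
  smooth (ointerval (a - e) (b + e)) f ->
  (forall t, p <= t <= b -> 0 <= Derive_n f 2 t) ->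
  exists F, smooth (ointerval (a - e) (b + e)) F /\
    (forall t, a - e < t <= p ->
       F t = f t /\ Derive F t = Derive f t /\ Derive_n F 2 t = Derive_n f 2 t) /\
    (forall t, p + del < t < b + e -> F t = F b + Derive F b * (t - b)) /\
    (forall t, p <= t <= b ->
       Derive f p <= Derive F t <= Derive f t /\ f p + Derive f p * (t - p) <= F t <= f t /\
       0 <= Derive_n F 2 t <= Derive_n f 2 t).
Proof.
  intros He Hp Hdel Hpb Hf Hconv; set (U := ointerval (a - e) (b + e)) in *.
  set (rho := ramp p (p + del)).
  assert (Hrho0 : forall s, s <= p -> rho s = 0) by (intros; apply ramp_0; lra).
  assert (Hrho1 : forall s, p + del <= s -> rho s = 1) by (intros; apply ramp_1; lra).
  assert (Hrho : forall s, 0 <= rho s <= 1) by (intros; apply ramp_range).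
  destruct (second_primitive (a - e) (b + e) (fun t => (1 - rho t) * Derive_n f 2 t) p
              (f p) (Derive f p)) as [F [HF [HFp [HF'p HF2]]]]; [split; lra| |].
  { apply smooth_mult_second_derive; [apply open_ointerval | | exact Hf].
    apply smooth_ext with (fun t => 1 + -1 * rho t); [apply open_ointerval | intros; ring|].
    apply smooth_plus; [apply open_ointerval | apply smooth_const |].
    apply smooth_scal, smooth_ramp. }
  fold U in HF, HF2.
  assert (Hcurv : forall s, p <= s <= b -> 0 <= Derive_n F 2 s <= Derive_n f 2 s).
  { intros s Hs; rewrite HF2 by (split; lra); pose proof (Hrho s).
    pose proof (Hconv s Hs); split; nra. }
  exists F; split; [exact HF | split; [|split]].
  - intros t Ht.
    assert (E2 : Derive_n F 2 t = Derive_n f 2 t)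
      by (rewrite HF2, Hrho0 by (lra || (split; lra)); ring).
    destruct (agree_of_second_derive_eq U f F p Hf HF HFp HF'p t) as [E0 E1]; [|auto].
    intros s Hs; rewrite Rmin_right, Rmax_left in Hs by lra.
    split; [split; lra|]; rewrite HF2, Hrho0 by (lra || (split; lra)); ring.
  - intros t Ht; destruct (affine_of_second_derive_zero F (Derive F) b t) as [_ E]; [|exact E].
    intros x Hx; pose proof (between_ointerval (p + del) (b + e) b t x ltac:(lra) Ht Hx).
    split; [apply (smooth_is_derive U); [exact HF | split; lra]|].
    replace 0 with (Derive_n F 2 x) by (rewrite HF2, Hrho1 by (lra || (split; lra)); ring).
    apply (smooth_is_derive2 U); [exact HF | split; lra].
  - intros t Ht.
    destruct (convex_comparison_right U f F p Hf HF HFp HF'p t) as [Hs Hv]; [lra | |].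
    { intros s Hs; split; [split; lra | apply Hcurv; lra]. }
    split; [exact Hs | split; [exact Hv | apply Hcurv; lra]].
Qed.

Lemma affine_near_right_end nR a b e f eta :
  1 <= nR -> a < b -> 0 < e -> 0 < eta ->
  smooth (ointerval (a - e) (b + e)) f ->
  (forall t, a <= t <= b -> 0 <= Derive_n f 2 t /\ psc_increasing_at nR f t) ->
  exists F r, 0 < r /\ smooth (ointerval (a - e) (b + e)) F /\
    (forall t, a - e < t <= (a + b) / 2 -> F t = f t) /\
    (forall t, b - r < t < b + r -> F t = F b + Derive F b * (t - b)) /\
    (forall t, a <= t <= b -> psc_increasing_at nR F t) /\
    Rabs (F b - f b) <= eta /\ Rabs (Derive F b - Derive f b) <= eta.
Proof.
  intros Hn Hab He Heta Hf Hconv; set (U := ointerval (a - e) (b + e)) in *.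
  assert (HbU : U b) by (split; lra).
  destruct (continuous_eps_delta f b (smooth_continuous U f b Hf HbU) eta Heta)
    as [d0 [Hd0 Hclose0]].
  destruct (continuous_eps_delta (Derive f) b
              (smooth_continuous U _ b (smooth_Derive_n U f 1 Hf) HbU) eta Heta)
    as [d1 [Hd1 Hclose1]].
  destruct (positive_lower_bound [d0 / 4; d1 / 4; (b - a) / 4; e / 4]) as [del [Hdel Hle]];
    [repeat constructor; lra|].
  rewrite !Forall_cons_iff in Hle.
  set (p := b - 2 * del); assert (Hpdef : p = b - 2 * del) by reflexivity; clearbody p.
  destruct (flatten_after a b e f p del) as [F [HF [Hjet [Haff Hcomp]]]]; try lra;
    [exact Hf | intros t Ht; apply Hconv; lra|].
  assert (Hfp : Rabs (f p - f b) < eta) by (apply Hclose0; rewrite Rabs_left; lra).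
  assert (Hf'p : Rabs (Derive f p - Derive f b) < eta)
    by (apply Hclose1; rewrite Rabs_left; lra).
  apply Rabs_def2 in Hfp, Hf'p.
  destruct (Hconv p ltac:(lra)) as [_ [Hfp0 [Hf'p0 _]]].
  exists F, del; split; [exact Hdel | split; [exact HF|]].
  split; [intros t Ht; apply Hjet; lra|].
  split; [intros t Ht; apply Haff; lra|].
  destruct (Hcomp b ltac:(lra)) as [[Hs1 Hs2] [[Hv1 Hv2] _]].
  assert (0 <= Derive f p * (b - p)) by (apply Rmult_le_pos; lra).
  split; [|split; apply Rabs_le; lra].
  intros t Ht; destruct (Rle_lt_dec t p) as [Htp|Htp].
  - destruct (Hjet t ltac:(lra)) as [E0 [E1 E2]].
    apply (psc_increasing_at_jet nR f); auto; apply Hconv; lra.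
  - destruct (Hcomp t ltac:(lra)) as [Hslope [Hval Hcurv]].
    assert (0 < f p + Derive f p * (t - p)) by nra.
    apply (psc_increasing_at_below nR f); [lra | lra | lra | exact Hcurv | apply Hconv; lra].
Qed.

Lemma flatten_before a b e f q del :
  0 < e -> 0 < del -> a + del < q -> q <= b ->
  smooth (ointerval (a - e) (b + e)) f ->
  (forall t, a <= t <= q -> 0 <= Derive_n f 2 t) ->
  exists F, smooth (ointerval (a - e) (b + e)) F /\
    (forall t, q <= t < b + e ->
       F t = f t /\ Derive F t = Derive f t /\ Derive_n F 2 t = Derive_n f 2 t) /\
    (forall t, a - e < t < q - del -> F t = F a + Derive F a * (t - a)) /\
    (forall t, a <= t <= q ->
       Derive f t <= Derive F t <= Derive f q /\ f q + Derive f q * (t - q) <= F t <= f t /\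
       0 <= Derive_n F 2 t <= Derive_n f 2 t).
Proof.
  intros He Hdel Hq Hqb Hf Hconv; set (U := ointerval (a - e) (b + e)) in *.
  set (rho := ramp (q - del) q).
  assert (Hrho0 : forall s, s <= q - del -> rho s = 0) by (intros; apply ramp_0; lra).
  assert (Hrho1 : forall s, q <= s -> rho s = 1) by (intros; apply ramp_1; lra).
  assert (Hrho : forall s, 0 <= rho s <= 1) by (intros; apply ramp_range).
  destruct (second_primitive (a - e) (b + e) (fun t => rho t * Derive_n f 2 t) q
              (f q) (Derive f q)) as [F [HF [HFq [HF'q HF2]]]]; [split; lra| |].
  { apply smooth_mult_second_derive; [apply open_ointerval | apply smooth_ramp | exact Hf]. }
  fold U in HF, HF2.
  assert (Hcurv : forall s, a <= s <= q -> 0 <= Derive_n F 2 s <= Derive_n f 2 s).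
  { intros s Hs; rewrite HF2 by (split; lra); pose proof (Hrho s).
    pose proof (Hconv s Hs); split; nra. }
  exists F; split; [exact HF | split; [|split]].
  - intros t Ht.
    assert (E2 : Derive_n F 2 t = Derive_n f 2 t)
      by (rewrite HF2, Hrho1 by (lra || (split; lra)); ring).
    destruct (agree_of_second_derive_eq U f F q Hf HF HFq HF'q t) as [E0 E1]; [|auto].
    intros s Hs; rewrite Rmin_left, Rmax_right in Hs by lra.
    split; [split; lra|]; rewrite HF2, Hrho1 by (lra || (split; lra)); ring.
  - intros t Ht; destruct (affine_of_second_derive_zero F (Derive F) a t) as [_ E]; [|exact E].
    intros x Hx; pose proof (between_ointerval (a - e) (q - del) a t x ltac:(lra) Ht Hx).
    split; [apply (smooth_is_derive U); [exact HF | split; lra]|].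
    replace 0 with (Derive_n F 2 x) by (rewrite HF2, Hrho0 by (lra || (split; lra)); ring).
    apply (smooth_is_derive2 U); [exact HF | split; lra].
  - intros t Ht.
    destruct (convex_comparison_left U f F q Hf HF HFq HF'q t) as [Hs Hv]; [lra | |].
    { intros s Hs; split; [split; lra | apply Hcurv; lra]. }
    split; [exact Hs | split; [exact Hv | apply Hcurv; lra]].
Qed.

Lemma slope_margin_near nR U f a eta : 1 < nR -> open U -> smooth U f -> U a ->
  0 <= Derive_n f 2 a -> psc_increasing_at nR f a -> 0 < eta ->
  exists del, 0 < del /\ forall s, Rabs (s - a) < del ->
    Derive f s < Derive f a + eta /\
    (nR - 1) * (Derive f s ^ 2 - Derive f a ^ 2) <
      scal_numerator nR (f a) (Derive f a) (Derive_n f 2 a) / 2 <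
      scal_numerator nR (f s) (Derive f s) (Derive_n f 2 s).
Proof.
  intros Hn HU Hf Ha Hf2 [Hfa [Hm Hpi]] Heta.
  set (m := Derive f a) in *; set (pi := scal_numerator nR (f a) m (Derive_n f 2 a)) in *.
  assert (Hm1 : m < 1) by (apply (slope_lt_1 nR (f a) m (Derive_n f 2 a)); auto; lra).
  destruct (positive_lower_bound [eta; 1; pi / (8 * (nR - 1))]) as [eta2 [Heta2 Hle]];
    [repeat constructor; try apply Rdiv_lt_0_compat; lra|].
  rewrite !Forall_cons_iff in Hle; destruct Hle as [Heta2e [Heta21 [Heta2pi _]]].
  apply Rmult_le_compat_l with (r := nR - 1) in Heta2pi; [|lra].
  replace ((nR - 1) * (pi / (8 * (nR - 1)))) with (pi / 8) in Heta2pi by (field; lra).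
  destruct (continuous_eps_delta (Derive f) a
              (smooth_continuous U _ a (smooth_Derive_n U f 1 Hf) Ha) eta2 Heta2)
    as [d1 [Hd1 Hclose1]].
  destruct (continuous_eps_delta _ a
              (smooth_continuous U _ a (smooth_scal_numerator U nR f HU Hf) Ha)
              (pi / 2) ltac:(lra)) as [d2 [Hd2 Hclose2]].
  exists (Rmin d1 d2); split; [now apply Rmin_glb_lt|].
  intros s Hs; pose proof (Rmin_l d1 d2); pose proof (Rmin_r d1 d2).
  assert (H1 : Rabs (Derive f s - m) < eta2) by (apply Hclose1; lra).
  assert (H2 : Rabs (scal_numerator nR (f s) (Derive f s) (Derive_n f 2 s) - pi) < pi / 2)
    by (apply Hclose2; lra).
  apply Rabs_def2 in H1, H2.
  (* [f' s ^ 2 - m ^ 2 = (f' s - m) (f' s + m)] and [f' s + m < 3] *)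
  assert (Derive f s ^ 2 - m ^ 2 <= 3 * eta2) by nra.
  assert ((nR - 1) * (Derive f s ^ 2 - m ^ 2) <= (nR - 1) * (3 * eta2))
    by (apply Rmult_le_compat_l; lra).
  split; [lra | split; lra].
Qed.

Lemma affine_near_left_end nR a b e f eta :
  1 < nR -> a < b -> 0 < e -> 0 < eta ->
  smooth (ointerval (a - e) (b + e)) f ->
  (forall t, a <= t <= b -> 0 <= Derive_n f 2 t /\ psc_increasing_at nR f t) ->
  exists F r, 0 < r /\ smooth (ointerval (a - e) (b + e)) F /\
    (forall t, (a + b) / 2 <= t < b + e -> F t = f t) /\
    (forall t, a - r < t < a + r -> F t = F a + Derive F a * (t - a)) /\
    (forall t, a <= t <= b -> psc_increasing_at nR F t) /\
    Rabs (F a - f a) <= eta /\ Rabs (Derive F a - Derive f a) <= eta.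
Proof.
  intros Hn Hab He Heta Hf Hconv; set (U := ointerval (a - e) (b + e)) in *.
  destruct (Hconv a ltac:(lra)) as [Hf2a Hpsca].
  destruct (slope_margin_near nR U f a (Rmin eta 1) Hn (open_ointerval _ _) Hf
              ltac:(split; lra) Hf2a Hpsca ltac:(apply Rmin_glb_lt; lra))
    as [d0 [Hd0 Hmargin]].
  pose proof (Rmin_l eta 1); pose proof (Rmin_r eta 1).
  assert (Htangent : forall t, a <= t <= b ->
            Derive f a <= Derive f t /\ f a + Derive f a * (t - a) <= f t).
  { intros t Ht; apply (convex_above_tangent U f a t Hf); [lra|].
    intros s Hs; split; [split; lra | apply Hconv; lra]. }
  destruct Hpsca as [Hfa [Hm Hnum]].
  assert (Hm1 : Derive f a < 1) by (apply (slope_lt_1 nR (f a) _ (Derive_n f 2 a)); lra).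
  destruct (positive_lower_bound [d0 / 4; (b - a) / 8; e / 8; eta / 8; f a / 8])
    as [del [Hdel Hle]]; [repeat constructor; lra|].
  rewrite !Forall_cons_iff in Hle.
  set (q := a + 2 * del); assert (Hqdef : q = a + 2 * del) by reflexivity; clearbody q.
  destruct (flatten_before a b e f q del) as [F [HF [Hjet [Haff Hcomp]]]]; try lra;
    [exact Hf | intros t Ht; apply Hconv; lra|].
  destruct (Hmargin q ltac:(rewrite Rabs_right; lra)) as [Hf'q [Hq _]].
  destruct (Htangent q ltac:(lra)) as [Hmq Hfq].
  assert (Derive f q * (q - a) <= 2 * (2 * del)) by (apply Rmult_le_compat; lra).
  assert (0 <= Derive f a * (q - a)) by (apply Rmult_le_pos; lra).
  exists F, del; split; [exact Hdel | split; [exact HF|]].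
  split; [intros t Ht; apply Hjet; lra|].
  split; [intros t Ht; apply Haff; lra|].
  destruct (Hcomp a ltac:(lra)) as [[Hs1 Hs2] [[Hv1 Hv2] _]].
  split; [|split; apply Rabs_le; lra].
  intros t Ht; destruct (Rle_lt_dec q t) as [Hqt|Htq].
  - destruct (Hjet t ltac:(lra)) as [E0 [E1 E2]].
    apply (psc_increasing_at_jet nR f); auto; apply Hconv; lra.
  - destruct (Hcomp t ltac:(lra)) as [Hslope [Hval Hcurv]].
    destruct (Htangent t ltac:(lra)) as [Hmt _].
    destruct (Hmargin t ltac:(rewrite Rabs_right; lra)) as [_ [_ Ht']].
    assert (Derive f q * (q - t) <= Derive f q * (q - a)) by (apply Rmult_le_compat_l; lra).
    assert (Derive f q ^ 2 - Derive f t ^ 2 <= Derive f q ^ 2 - Derive f a ^ 2)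
      by (assert (Derive f a ^ 2 <= Derive f t ^ 2) by (apply pow_incr; lra); lra).
    apply (psc_increasing_at_margin nR f F t (Derive f q)); try lra.
    assert ((nR - 1) * (Derive f q ^ 2 - Derive f t ^ 2)
            <= (nR - 1) * (Derive f q ^ 2 - Derive f a ^ 2)) by (apply Rmult_le_compat_l; lra).
    lra.
Qed.

(** * Bridging two nearby lines *)

Lemma bounded_on_compact h a b : a <= b -> (forall u, a <= u <= b -> continuous h u) ->
  exists B, 0 <= B /\ forall u, a <= u <= b -> Rabs (h u) <= B.
Proof.
  intros Hab Hc.
  destruct (continuity_ab_maj (fun u => Rabs (h u)) a b Hab) as [M [HM _]].
  - intros c Hcc; apply (continuity_pt_comp h Rabs c); [|apply Rcontinuity_abs].
    now apply continuity_pt_filterlim, Hc.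
  - exists (Rabs (h M)); split; [apply Rabs_pos | exact HM].
Qed.

Lemma Rabs_mult_le x y X Y : Rabs x <= X -> Rabs y <= Y -> Rabs (x * y) <= X * Y.
Proof. intros Hx Hy; rewrite Rabs_mult; apply Rmult_le_compat; auto; apply Rabs_pos. Qed.

Lemma psc_near_line nR A m d : 1 < nR -> 0 < A -> 0 < m < 1 -> 0 <= d ->
  exists e0, 0 < e0 /\ forall x F D D2, 0 <= x <= d ->
    Rabs (F - (A + m * x)) <= e0 -> Rabs (D - m) <= e0 -> Rabs D2 <= e0 ->
    0 < F /\ 0 < D /\ 0 < scal_numerator nR F D D2.
Proof.
  intros Hn HA Hm Hd.
  set (c := (nR - 1) * (1 - m ^ 2)).
  assert (Hc : 0 < c) by (apply Rmult_lt_0_compat; nra).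
  assert (Hmd : 0 <= m * d) by nra.
  set (k := 2 * (A + m * d + 1) + 3 * (nR - 1)).
  assert (Hk : 0 < k) by (unfold k; lra).
  destruct (positive_lower_bound [1; A / 2; m / 2; c / (2 * k)]) as [e0 [He0 Hle]];
    [repeat constructor; try apply Rdiv_lt_0_compat; lra|].
  rewrite !Forall_cons_iff in Hle; destruct Hle as [He01 [HeA [Hem [Hek _]]]].
  apply Rmult_le_compat_r with (r := k) in Hek; [|lra].
  replace (c / (2 * k) * k) with (c / 2) in Hek by (field; lra).
  exists e0; split; [lra|].
  intros x F D D2 Hx HF HD HD2.
  apply Rabs_le_between in HF; apply Rabs_le_between in HD; apply Rabs_le_between in HD2.
  assert (0 <= m * x <= m * d) by (split; [apply Rmult_le_pos | apply Rmult_le_compat_l]; lra).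
  split; [lra | split; [lra|]].
  assert (HD2F : D2 * F <= e0 * (A + m * d + 1)).
  { apply Rle_trans with (e0 * F); [apply Rmult_le_compat_r|apply Rmult_le_compat_l]; lra. }
  assert (HDsq : D ^ 2 <= m ^ 2 + 3 * e0) by nra.
  assert ((nR - 1) * (D ^ 2 - m ^ 2) <= (nR - 1) * (3 * e0))
    by (apply Rmult_le_compat_l; lra).
  unfold scal_numerator, k, c in *; nra.
Qed.

Definition bridge (tau : R -> R) (b a A1 s1 A2 s2 t : R) : R :=
  A1 + s1 * (t - b) + tau t * (A2 + s2 * (t - a) - (A1 + s1 * (t - b))).

Section Bridge.
Variables (tau : R -> R) (b a A1 s1 A2 s2 : R).
Hypothesis Htau : smooth (fun _ => True) tau.

Let gap t := A2 + s2 * (t - a) - (A1 + s1 * (t - b)).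

Lemma smooth_bridge : smooth (fun _ => True) (bridge tau b a A1 s1 A2 s2).
Proof.
  apply smooth_plus; [exact open_true | | apply smooth_mult; [exact open_true | exact Htau |]];
    [apply smooth_ext with (fun t => (A1 - s1 * b) + s1 * t)
    | apply smooth_ext with (fun t => (A2 - s2 * a - A1 + s1 * b) + (s2 - s1) * t)];
    try exact open_true; try (intros; ring); apply smooth_affine.
Qed.

Lemma Derive_bridge t :
  Derive (bridge tau b a A1 s1 A2 s2) t = s1 + Derive tau t * gap t + tau t * (s2 - s1).
Proof.
  apply is_derive_unique; unfold bridge, gap; auto_derive.
  - apply (smooth_ex_derive (fun _ => True)); [exact Htau | exact I].
  - change (fun x => tau x) with tau; ring.
Qed.

Lemma Derive2_bridge t :
  Derive_n (bridge tau b a A1 s1 A2 s2) 2 t =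
  Derive_n tau 2 t * gap t + 2 * Derive tau t * (s2 - s1).
Proof.
  change (Derive (Derive (bridge tau b a A1 s1 A2 s2)) t =
          Derive_n tau 2 t * gap t + 2 * Derive tau t * (s2 - s1)).
  rewrite (Derive_ext _ _ t Derive_bridge); apply is_derive_unique; unfold gap; auto_derive.
  - repeat split; apply (smooth_ex_derive (fun _ => True)); auto.
    exact (smooth_Derive_n _ tau 1 Htau).
  - change (Derive (fun x => Derive tau x) t) with (Derive_n tau 2 t).
    change (fun x => tau x) with tau; ring.
Qed.

End Bridge.

Definition line_bridge (b a : R) : R -> R -> R -> R -> R -> R :=
  bridge (ramp (b + (a - b) / 4) (a - (a - b) / 4)) b a.

Lemma line_bridge_left b a A1 s1 A2 s2 t : b < a -> t <= b + (a - b) / 4 ->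
  line_bridge b a A1 s1 A2 s2 t = A1 + s1 * (t - b).
Proof. intros Hba Ht; unfold line_bridge, bridge; rewrite ramp_0 by lra; ring. Qed.

Lemma line_bridge_right b a A1 s1 A2 s2 t : b < a -> a - (a - b) / 4 <= t ->
  line_bridge b a A1 s1 A2 s2 t = A2 + s2 * (t - a).
Proof. intros Hba Ht; unfold line_bridge, bridge; rewrite ramp_1 by lra; ring. Qed.

Lemma lines_close b a A m A1 s1 A2 s2 eta t : b <= t <= a ->
  Rabs (A1 - A) <= eta -> Rabs (s1 - m) <= eta ->
  Rabs (A2 - (A + m * (a - b))) <= eta -> Rabs (s2 - m) <= eta ->
  Rabs (A2 + s2 * (t - a) - (A1 + s1 * (t - b))) <= 2 * (1 + (a - b)) * eta.
Proof.
  intros Ht HA1 Hs1 HA2 Hs2.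
  replace (A2 + s2 * (t - a) - (A1 + s1 * (t - b)))
    with ((A2 - (A + m * (a - b))) + (s2 - m) * (t - a) - (A1 - A) - (s1 - m) * (t - b))
    by ring.
  assert (Rabs (t - a) <= a - b /\ Rabs (t - b) <= a - b) as [Ha Hb]
    by (split; apply Rabs_le; lra).
  pose proof (Rabs_mult_le _ _ _ _ Hs2 Ha) as P2; pose proof (Rabs_mult_le _ _ _ _ Hs1 Hb) as P1.
  apply Rabs_le; apply Rabs_le_between in HA1, HA2, P1, P2; nra.
Qed.

Lemma line_bridge_close b a : b < a -> exists K, 0 < K /\
  forall A m A1 s1 A2 s2 eta, 0 <= eta ->
    Rabs (A1 - A) <= eta -> Rabs (s1 - m) <= eta ->
    Rabs (A2 - (A + m * (a - b))) <= eta -> Rabs (s2 - m) <= eta ->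
    forall t, b <= t <= a ->
      let M := line_bridge b a A1 s1 A2 s2 in
      Rabs (M t - (A + m * (t - b))) <= K * eta /\
      Rabs (Derive M t - m) <= K * eta /\ Rabs (Derive_n M 2 t) <= K * eta.
Proof.
  intros Hba; set (tau := ramp (b + (a - b) / 4) (a - (a - b) / 4)).
  assert (Htau : smooth (fun _ => True) tau) by apply smooth_ramp.
  destruct (bounded_on_compact (Derive tau) b a) as [B1 [HB1 Htau1]]; [lra| |].
  { intros u _; apply (smooth_continuous (fun _ => True));
      [apply (smooth_Derive_n _ tau 1 Htau) | exact I]. }
  destruct (bounded_on_compact (Derive_n tau 2) b a) as [B2 [HB2 Htau2]]; [lra| |].
  { intros u _; apply (smooth_continuous (fun _ => True));
      [apply smooth_Derive_n, Htau | exact I]. }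
  set (d := a - b); assert (Hd : 0 < d) by (unfold d; lra).
  exists (3 * (1 + d) + 2 * (1 + d) * (B1 + B2) + 4 * B1 + 3); split; [nra|].
  intros A m A1 s1 A2 s2 eta Heta HA1 Hs1 HA2 Hs2 t Ht M.
  unfold M, line_bridge; fold tau.
  rewrite (Derive_bridge tau), (Derive2_bridge tau) by exact Htau.
  set (gap := A2 + s2 * (t - a) - (A1 + s1 * (t - b))).
  assert (Hdt : Rabs (t - b) <= d /\ Rabs (t - a) <= d) by (split; apply Rabs_le; unfold d; lra).
  assert (Hgap : Rabs gap <= 2 * (1 + d) * eta) by (apply (lines_close b a A m); auto).
  assert (Hds : Rabs (s2 - s1) <= 2 * eta)
    by (apply Rabs_le; apply Rabs_le_between in Hs1, Hs2; lra).
  assert (Htau0 : Rabs (tau t) <= 1)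
    by (pose proof (ramp_range (b + (a - b) / 4) (a - (a - b) / 4) t);
        apply Rabs_le; unfold tau; lra).
  pose proof (Rabs_mult_le _ _ _ _ Htau0 Hgap) as P0.
  pose proof (Rabs_mult_le _ _ _ _ (Htau1 t Ht) Hgap) as P1.
  pose proof (Rabs_mult_le _ _ _ _ (Htau2 t Ht) Hgap) as P2.
  pose proof (Rabs_mult_le _ _ _ _ (Htau1 t Ht) Hds) as P3.
  pose proof (Rabs_mult_le _ _ _ _ Htau0 Hds) as P4.
  pose proof (Rabs_mult_le _ _ _ _ Hs1 (proj1 Hdt)) as P5.
  assert (0 <= B1 * eta /\ 0 <= B2 * eta /\ 0 <= d * eta /\ 0 <= B1 * (d * eta)
          /\ 0 <= B2 * (d * eta)) by (repeat split; repeat apply Rmult_le_pos; lra).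
  split; [|split].
  - unfold bridge; fold gap.
    replace (A1 + s1 * (t - b) + tau t * gap - (A + m * (t - b)))
      with ((A1 - A) + (s1 - m) * (t - b) + tau t * gap) by ring.
    eapply Rle_trans; [apply Rabs_triang|].
    eapply Rle_trans; [apply Rplus_le_compat_r, Rabs_triang|].
    nra.
  - replace (s1 + Derive tau t * gap + tau t * (s2 - s1) - m)
      with ((s1 - m) + Derive tau t * gap + tau t * (s2 - s1)) by ring.
    eapply Rle_trans; [apply Rabs_triang|].
    eapply Rle_trans; [apply Rplus_le_compat_r, Rabs_triang|].
    nra.
  - replace (Derive_n tau 2 t * gap + 2 * Derive tau t * (s2 - s1))
      with (Derive_n tau 2 t * gap + 2 * (Derive tau t * (s2 - s1))) by ring.
    eapply Rle_trans; [apply Rabs_triang|].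
    rewrite (Rabs_mult 2), (Rabs_pos_eq 2) by lra.
    nra.
Qed.

Lemma psc_bridge nR b a A m : 1 < nR -> b < a -> 0 < A -> 0 < m < 1 ->
  exists eta, 0 < eta /\ forall A1 s1 A2 s2,
    Rabs (A1 - A) <= eta -> Rabs (s1 - m) <= eta ->
    Rabs (A2 - (A + m * (a - b))) <= eta -> Rabs (s2 - m) <= eta ->
    exists M, smooth (fun _ => True) M /\
      (forall t, t <= b + (a - b) / 4 -> M t = A1 + s1 * (t - b)) /\
      (forall t, a - (a - b) / 4 <= t -> M t = A2 + s2 * (t - a)) /\
      forall t, b <= t <= a -> psc_increasing_at nR M t.
Proof.
  intros Hn Hba HA Hm.
  destruct (psc_near_line nR A m (a - b) Hn HA Hm ltac:(lra)) as [e0 [He0 Hnear]].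
  destruct (line_bridge_close b a Hba) as [K [HK Hclose]].
  exists (e0 / K); split; [now apply Rdiv_lt_0_compat|].
  intros A1 s1 A2 s2 HA1 Hs1 HA2 Hs2.
  exists (line_bridge b a A1 s1 A2 s2); split; [apply smooth_bridge, smooth_ramp|].
  split; [intros t Ht; now apply line_bridge_left|].
  split; [intros t Ht; now apply line_bridge_right|].
  intros t Ht.
  destruct (Hclose A m A1 s1 A2 s2 (e0 / K)) with t as [Hv [Hs Hc]]; auto.
  { apply Rlt_le, Rdiv_lt_0_compat; lra. }
  replace (K * (e0 / K)) with e0 in Hv, Hs, Hc by (field; lra).
  apply (Hnear (t - b)); [lra | exact Hv | exact Hs | exact Hc].
Qed.

(** * Gluing *)

Definition glue (c : R) (g h : R -> R) (t : R) : R := if Rle_dec t c then g t else h t.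

Lemma glue_eq_left c g h u v : u < c ->
  (forall y, u < y < v -> g y = h y) -> forall y, y < v -> glue c g h y = g y.
Proof.
  intros Huc Hgh y Hy; unfold glue; destruct (Rle_dec y c); [reflexivity|].
  symmetry; apply Hgh; lra.
Qed.

Lemma glue_eq_right c g h u v : c < v ->
  (forall y, u < y < v -> g y = h y) -> forall y, u < y -> glue c g h y = h y.
Proof.
  intros Hcv Hgh y Hy; unfold glue; destruct (Rle_dec y c); [|reflexivity].
  apply Hgh; lra.
Qed.

Lemma agree_locally (V : R -> Prop) (f g : R -> R) t : open V -> V t ->
  (forall y, V y -> f y = g y) -> locally t (fun y => f y = g y).
Proof. intros HV Ht Hfg; exact (locally_open V _ HV Hfg t Ht). Qed.

Section Assembly.
Variables (nR a1 b1 a2 b2 e1 e2 r1 r2 : R) (F1 M F2 : R -> R).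
Hypotheses (Hba : b1 < a2) (He1 : 0 < e1) (He2 : 0 < e2) (Hr1 : 0 < r1) (Hr2 : 0 < r2).
Hypotheses (HF1 : smooth (ointerval (a1 - e1) (b1 + e1)) F1) (HM : smooth (fun _ => True) M)
  (HF2 : smooth (ointerval (a2 - e2) (b2 + e2)) F2).
Hypotheses
  (HF1lin : forall t, b1 - r1 < t < b1 + r1 -> F1 t = F1 b1 + Derive F1 b1 * (t - b1))
  (HMl : forall t, t <= b1 + (a2 - b1) / 4 -> M t = F1 b1 + Derive F1 b1 * (t - b1))
  (HMr : forall t, a2 - (a2 - b1) / 4 <= t -> M t = F2 a2 + Derive F2 a2 * (t - a2))
  (HF2lin : forall t, a2 - r2 < t < a2 + r2 -> F2 t = F2 a2 + Derive F2 a2 * (t - a2)).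

Let r := Rmin (Rmin r1 r2) ((a2 - b1) / 4).

Lemma assembly_radius : 0 < r /\ r <= r1 /\ r <= r2 /\ r <= (a2 - b1) / 4.
Proof.
  pose proof (Rmin_l (Rmin r1 r2) ((a2 - b1) / 4));
    pose proof (Rmin_r (Rmin r1 r2) ((a2 - b1) / 4)).
  pose proof (Rmin_l r1 r2); pose proof (Rmin_r r1 r2).
  repeat split; try (unfold r; lra); unfold r; repeat apply Rmin_glb_lt; lra.
Qed.

Let X := glue a2 M F2.
Let f := glue b1 F1 X.

Lemma assembly_M_eq_F2 t : a2 - r < t < a2 + r -> M t = F2 t.
Proof.
  pose proof assembly_radius; intros Ht.
  rewrite HMr, (HF2lin t) by lra; reflexivity.
Qed.

Lemma assembly_X_eq_M t : t < a2 + r -> X t = M t.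
Proof.
  pose proof assembly_radius.
  apply (glue_eq_left _ _ _ (a2 - r)); [lra | exact assembly_M_eq_F2].
Qed.

Lemma assembly_X_eq_F2 t : a2 - r < t -> X t = F2 t.
Proof.
  pose proof assembly_radius.
  apply (glue_eq_right _ _ _ _ (a2 + r)); [lra | exact assembly_M_eq_F2].
Qed.

Lemma assembly_F1_eq_X t : b1 - r < t < b1 + r -> F1 t = X t.
Proof.
  pose proof assembly_radius; intros Ht.
  rewrite assembly_X_eq_M, (HF1lin t), HMl by lra; reflexivity.
Qed.

Lemma assembly_eq_F1 t : t < b1 + r -> f t = F1 t.
Proof.
  pose proof assembly_radius.
  apply (glue_eq_left _ _ _ (b1 - r)); [lra | exact assembly_F1_eq_X].
Qed.

Lemma assembly_eq_M t : b1 - r < t < a2 + r -> f t = M t.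
Proof.
  pose proof assembly_radius; intros Ht; unfold f.
  rewrite (glue_eq_right _ _ _ (b1 - r) (b1 + r)); [|lra | exact assembly_F1_eq_X | lra].
  apply assembly_X_eq_M; lra.
Qed.

Lemma assembly_eq_F2 t : a2 - r < t -> f t = F2 t.
Proof.
  pose proof assembly_radius; intros Ht; unfold f.
  rewrite (glue_eq_right _ _ _ (b1 - r) (b1 + r)); [|lra | exact assembly_F1_eq_X | lra].
  now apply assembly_X_eq_F2.
Qed.

Lemma assembly_locally t : a1 - e1 < t < b2 + e2 ->
  (t <= b1 /\ locally t (fun y => F1 y = f y) /\ ointerval (a1 - e1) (b1 + e1) t) \/
  (b1 < t <= a2 /\ locally t (fun y => M y = f y)) \/
  (a2 < t /\ locally t (fun y => F2 y = f y) /\ ointerval (a2 - e2) (b2 + e2) t).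
Proof.
  pose proof assembly_radius; intros Ht.
  destruct (Rle_lt_dec t b1) as [H1|H1]; [|destruct (Rle_lt_dec t a2) as [H2|H2]].
  - left; repeat split; try lra.
    apply (agree_locally (fun y => y < b1 + r)); [apply open_lt | lra |].
    intros y Hy; symmetry; now apply assembly_eq_F1.
  - right; left; split; [lra|].
    apply (agree_locally (ointerval (b1 - r) (a2 + r))); [apply open_ointerval | split; lra |].
    intros y Hy; symmetry; now apply assembly_eq_M.
  - right; right; repeat split; try lra.
    apply (agree_locally (fun y => a2 - r < y)); [apply open_gt | lra |].
    intros y Hy; symmetry; now apply assembly_eq_F2.
Qed.

Lemma assembly_smooth : smooth_on a1 b2 f.
Proof.
  exists (Rmin e1 e2); split; [now apply Rmin_glb_lt|].
  intros k t Ht; pose proof (Rmin_l e1 e2); pose proof (Rmin_r e1 e2).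
  destruct (assembly_locally t ltac:(lra)) as [[_ [Hloc HU]] | [[_ Hloc] | [_ [Hloc HU]]]];
    eapply ex_derive_n_ext_loc; try exact Hloc; [apply HF1 | apply HM | apply HF2]; auto.
Qed.

Lemma assembly_psc :
  (forall t, a1 <= t <= b1 -> psc_increasing_at nR F1 t) ->
  (forall t, b1 <= t <= a2 -> psc_increasing_at nR M t) ->
  (forall t, a2 <= t <= b2 -> psc_increasing_at nR F2 t) ->
  forall t, a1 <= t <= b2 -> psc_increasing_at nR f t.
Proof.
  intros P1 PM P2 t Ht.
  destruct (assembly_locally t ltac:(lra)) as [[H [Hloc _]] | [[H Hloc] | [H [Hloc _]]]];
    eapply psc_increasing_at_locally; try exact Hloc; [apply P1 | apply PM | apply P2]; lra.
Qed.

Lemma assembly_eq_left t : t <= b1 -> f t = F1 t.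
Proof. pose proof assembly_radius; intros Ht; apply assembly_eq_F1; lra. Qed.

Lemma assembly_eq_right t : a2 < t -> f t = F2 t.
Proof. pose proof assembly_radius; intros Ht; apply assembly_eq_F2; lra. Qed.

End Assembly.

Lemma psc_increasing_at_of_warped_psc n a b f : (0 < n)%nat ->
  (forall t, a <= t <= b -> 0 < f t /\ 0 < Derive f t /\ 0 < Derive_n f 2 t) ->
  warped_psc n a b f ->
  forall t, a <= t <= b -> 0 <= Derive_n f 2 t /\ psc_increasing_at (INR n) f t.
Proof.
  intros Hn HI Hpsc t Ht; destruct (HI t Ht) as [Hf [Hf' Hf'']].
  split; [lra|]; apply psc_increasing_at_iff; auto.
Qed.

Theorem lemma4p4 (n : nat) (a1 b1 a2 b2 : R) (f1 f2 : R -> R) :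
  (3 <= n)%nat ->
  a1 < b1 -> a2 < b2 ->
  smooth_on a1 b1 f1 -> smooth_on a2 b2 f2 ->
  (* (I) *)
  (forall t, a1 <= t <= b1 ->
     0 < f1 t /\ 0 < Derive f1 t /\ 0 < Derive_n f1 2 t) ->
  (forall t, a2 <= t <= b2 ->
     0 < f2 t /\ 0 < Derive f2 t /\ 0 < Derive_n f2 2 t) ->
  (* (II) *)
  warped_psc n a1 b1 f1 -> warped_psc n a2 b2 f2 ->
  (* (III) *)
  f1 b1 < f2 a2 -> Derive f1 b1 = Derive f2 a2 ->
  (* positioning *)
  a2 - b1 = (f2 a2 - f1 b1) / Derive f1 b1 ->
  exists f : R -> R,
    smooth_on a1 b2 f /\
    (forall t, a1 <= t <= b2 -> 0 < f t /\ 0 < Derive f t) /\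
    (forall t, a1 <= t <= (a1 + b1) / 2 -> f t = f1 t) /\
    (forall t, (a2 + b2) / 2 <= t <= b2 -> f t = f2 t) /\
    warped_psc n a1 b2 f.
Proof.
  intros Hn Hab1 Hab2 [e1 [He1 Hf1]] [e2 [He2 Hf2]] HI1 HI2 Hpsc1 Hpsc2 Hlt Hslope Hpos.
  assert (HnR : 1 < INR n) by (apply (lt_INR 1); lia).
  pose proof (psc_increasing_at_of_warped_psc n a1 b1 f1 ltac:(lia) HI1 Hpsc1) as Hc1.
  pose proof (psc_increasing_at_of_warped_psc n a2 b2 f2 ltac:(lia) HI2 Hpsc2) as Hc2.
  destruct (Hc1 b1 ltac:(lra)) as [Hf1'' [Hfb [Hm Hnum]]].
  assert (Hm1 : Derive f1 b1 < 1)
    by (apply (slope_lt_1 (INR n) (f1 b1) _ (Derive_n f1 2 b1)); auto; lra).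
  assert (Hba : b1 < a2)
    by (enough (0 < a2 - b1) by lra; rewrite Hpos; apply Rdiv_lt_0_compat; lra).
  assert (Hf2a : f2 a2 = f1 b1 + Derive f1 b1 * (a2 - b1)) by (rewrite Hpos; field; lra).
  destruct (psc_bridge (INR n) b1 a2 (f1 b1) (Derive f1 b1) HnR Hba Hfb (conj Hm Hm1))
    as [eta [Heta Hbridge]].
  destruct (affine_near_right_end (INR n) a1 b1 e1 f1 eta ltac:(lra) Hab1 He1 Heta Hf1 Hc1)
    as [F1 [r1 [Hr1 [HF1 [HF1f1 [HF1lin [HF1psc [HF1v HF1s]]]]]]]].
  destruct (affine_near_left_end (INR n) a2 b2 e2 f2 eta HnR Hab2 He2 Heta Hf2 Hc2)
    as [F2 [r2 [Hr2 [HF2 [HF2f2 [HF2lin [HF2psc [HF2v HF2s]]]]]]]].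
  destruct (Hbridge (F1 b1) (Derive F1 b1) (F2 a2) (Derive F2 a2))
    as [M [HM [HMl [HMr HMpsc]]]];
    [exact HF1v | exact HF1s | rewrite <- Hf2a; exact HF2v | rewrite Hslope; exact HF2s |].
  pose proof (assembly_psc (INR n) a1 b1 a2 b2 e1 e2 r1 r2 F1 M F2 Hba He1 He2 Hr1 Hr2
                HF1lin HMl HMr HF2lin HF1psc HMpsc HF2psc) as Hpsc.
  exists (glue b1 F1 (glue a2 M F2)); split; [|split; [|split; [|split]]].
  - exact (assembly_smooth a1 b1 a2 b2 e1 e2 r1 r2 F1 M F2 Hba He1 He2 Hr1 Hr2 HF1 HM HF2
             HF1lin HMl HMr HF2lin).
  - intros t Ht; destruct (Hpsc t Ht) as [Hf [Hf' _]]; split; assumption.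
  - intros t Ht; rewrite (assembly_eq_left b1 a2 r1 r2 F1 M F2) by (auto || lra).
    apply HF1f1; lra.
  - intros t Ht; rewrite (assembly_eq_right b1 a2 r1 r2 F1 M F2) by (auto || lra).
    apply HF2f2; lra.
  - intros t Ht; pose proof (Hpsc t Ht) as Hpsct.
    apply psc_increasing_at_iff in Hpsct; [tauto | lia].
Qed.
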